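(* Let $\mathcal N=(\mathcal L,\mathcal I,D_{\mathcal L})$ be a network with a binary collision profile and character $D^*$. (i) If $S$ is a collision-free framed schedule of frame length $T_F\ge 2D^*+1$ whose rate vector $R_S$ exists, then $R_S\in(1-D^*/T_F)\,\widetilde{\mathcal R}^{(\mathcal L,\mathcal I)}$, and hence $R_S\in\widetilde{\mathcal R}^{(\mathcal L,\mathcal I)}$. (ii) For every $R\in\widetilde{\mathcal R}^{(\mathcal L,\mathcal I)}$ and every $\epsilon>0$ there exist a frame length $T_F$ and a collision-free framed schedule $S$ of frame length $T_F$ whose rate vector exists and satisfies $R_S(l)\ge R(l)-\epsilon$ for all $l\in\mathcal L$.
   Context: A network is a triple $\mathcal N=(\mathcal L,\mathcal I,D_{\mathcal L})$ where $\mathcal L$ is a finite nonempty set of links, each $\mathcal I(l)$ is a collection of nonempty subsets of $\mathcal L$, and $D_{\mathcal L}$ assigns an integer $D_{\mathcal L}(l,l')$ to every pair with $l'\in\phi$ for some $\phi\in\mathcal I(l)$. The profile is binary if every $\phi\in\mathcal I(l)$ is a singleton; then $\mathcal I(l)$ is identified with a subset of $\mathcal L$. The character is $D^*=\max_{l}\max_{\phi\in\mathcal I(l)}\max_{l'\in\phi}|D_{\mathcal L}(l,l')|$ (0 if there are no collision sets). A schedule is a map $S:\mathcal L\times\mathbb Z\to\{0,1\}$; $S(l,t)$ has a collision if there is $\phi\in\mathcal I(l)$ with $S(l',t+D_{\mathcal L}(l,l'))=1$ for all $l'\in\phi$; $S$ is collision free if no $(l,t)$ with $S(l,t)=1$ has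 a collision. $R_S(l)=\lim_{T\to\infty}\frac1T\sum_{t=0}^{T-1}\iota\big(S(l,t)=1\text{ and collision free}\big)$ when the limit exists; $R_S=(R_S(l))_l$ is the rate vector when all limits exist. For an integer $T_F\ge D^*+1$, a framed schedule of frame length $T_F$ is a schedule $S$ with $S(l,t)=0$ for $t<0$, such that for every $k\ge0$ and every $l$: $S(l,kT_F+i)=0$ for $i=T_F-D^*,\dots,T_F-1$, and the values $S(l,kT_F+i)$, $i=0,\dots,T_F-D^*-1$, are all equal. An independent set of $(\mathcal L,\mathcal I)$ is a subset $A\subseteq\mathcal L$ such that there are no $l\in A$ and $\phi\in\mathcal I(l)$ with $\phi\subseteq A$; $\widetilde{\mathcal R}^{(\mathcal L,\mathcal I)}\subseteq\mathbb R^{\mathcal L}$ is the convex hull of the indicator vectors of all independent sets of $(\mathcal L,\mathcal I)$. *)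

From HB Require Import structures.
From mathcomp Require Import all_boot all_order all_algebra.
From mathcomp Require Import all_classical all_reals all_analysis.
Set Implicit Arguments. Unset Strict Implicit. Unset Printing Implicit Defensive.
Import Order.TTheory GRing.Theory Num.Theory.
Import numFieldNormedType.Exports.
Local Open Scope ring_scope.
Local Open Scope classical_set_scope.

(* A network with binary collision profile on the finite link type T:
   I : T -> {set T}   (I l = the set of links l' with {l'} in I(l)),
   D : T -> T -> int  (only its values on pairs with l' \in I l matter). *)

Definition Dstar (T : finType) (I : T -> {set T}) (D : T -> T -> int) : nat :=
  (\max_(l : T) \max_(l' in I l) `|D l l'|)%N.

Definition schedule (T : finType) := T -> int -> bool.

Definition has_collision (T : finType) (I : T -> {set T}) (D : T -> T -> int)
  (S : schedule T) (l : T) (t : int) : bool :=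
  [exists l' in I l, S l' (t + D l l')].

Definition collision_free (T : finType) (I : T -> {set T}) (D : T -> T -> int)
  (S : schedule T) : Prop :=
  forall l t, S l t -> ~~ has_collision I D S l t.

Definition avg_success (R : realType) (T : finType) (I : T -> {set T})
  (D : T -> T -> int) (S : schedule T) (l : T) (n : nat) : R :=
  (n%:R)^-1 * \sum_(t < n) ((S l (Posz t) && ~~ has_collision I D S l (Posz t)) : nat)%:R.

Definition rate_vector (R : realType) (T : finType) (I : T -> {set T})
  (D : T -> T -> int) (S : schedule T) (r : T -> R) : Prop :=
  forall l, (fun n : nat => avg_success R I D S l n) @ \oo --> r l.

Definition framed (T : finType) (I : T -> {set T}) (D : T -> T -> int)
  (TF : nat) (S : schedule T) : Prop :=
  let Ds := Dstar I D in
  (Ds.+1 <= TF)%N /\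
  (forall l (t : int), t < 0 -> S l t = false) /\
  (forall l (k : nat),
     (forall i : nat, (TF - Ds <= i < TF)%N -> S l (Posz (k * TF + i)) = false) /\
     (forall i j : nat, (i < TF - Ds)%N -> (j < TF - Ds)%N ->
        S l (Posz (k * TF + i)) = S l (Posz (k * TF + j)))).

Definition independent (T : finType) (I : T -> {set T}) (A : {set T}) : bool :=
  [forall l in A, [forall l' in I l, l' \notin A]].

Definition in_indep_hull (R : realType) (T : finType) (I : T -> {set T})
  (x : T -> R) : Prop :=
  exists w : {set T} -> R,
    (forall A, 0 <= w A) /\
    (forall A, ~~ independent I A -> w A = 0) /\
    \sum_(A : {set T}) w A = 1 /\
    (forall l, x l = \sum_(A : {set T}) w A * (l \in A)%:R).

From HB Require Import structures.
From mathcomp Require Import all_boot all_order all_algebra.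
From mathcomp Require Import all_classical all_reals all_analysis.
Set Implicit Arguments. Unset Strict Implicit. Unset Printing Implicit Defensive.
Import Order.TTheory GRing.Theory Num.Theory.
Import numFieldNormedType.Exports.
From mathcomp Require Import zify ring lra.
Local Open Scope ring_scope.
Local Open Scope classical_set_scope.

(* In a framed collision-free schedule with [TF >= 2 Ds + 1], the
   set of links active in a frame is independent: two active links in
   conflict would, at some pair of slots of the same frame at distance
   [|D l l'| <= Ds], collide.  Sampling the success average at frame
   boundaries therefore gives the frame efficiency [(TF - Ds)/TF] times the
   empirical frequency vector of a sequence of independent sets, which lies
   in the hull.  The hull is closed (the weights live in the compact cube
   [[0,1]^{set T}], by Tychonoff), so the limit rate, divided by the frame
   efficiency, is a hull point; shrinking by the efficiency stays inside the
   hull because it contains the vertex [0].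

   Round the weights of a hull point down to multiples of [1/N],
   list the independent sets with these multiplicities, and serve them
   cyclically, one per frame of length [TF = (Ds + 1) K0].  The schedule is
   periodic, so its rate exists and is the frequency over one period; the
   rounding and guard-interval losses are both below [eps/2] for
   [K0 > 2/eps]. *)

Section IndependentSetHull.
Variables (R : realType) (T : finType) (I : T -> {set T}).

Lemma sum_indicator (V : finType) (f : V -> R) (A : V) :
  \sum_B f B * (B == A)%:R = f A.
Proof.
rewrite (bigD1 A) //= eqxx mulr1 big1 ?addr0 // => B /negbTE ->.
by rewrite mulr0.
Qed.

Lemma independent_set0 : independent I finset.set0.
Proof. by apply/forallP => l; rewrite inE. Qed.

Lemma indep_hull_vertex (A : {set T}) :
  independent I A -> in_indep_hull I (fun l => (l \in A)%:R : R).
Proof.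
move=> indA; exists (fun B => (B == A)%:R); split; [|split; [|split]].
- by move=> B; rewrite ler0n.
- by move=> B; case: eqP => // ->; rewrite indA.
- by rewrite -[RHS](sum_indicator (fun=> 1) A); apply: eq_bigr => B _; rewrite mul1r.
- move=> l; rewrite -(sum_indicator (fun B : {set T} => (l \in B)%:R) A).
  by apply: eq_bigr => B _; rewrite mulrC.
Qed.

Lemma indep_hull_convex (x y : T -> R) (a : R) :
  in_indep_hull I x -> in_indep_hull I y -> 0 <= a <= 1 ->
  in_indep_hull I (fun l => a * x l + (1 - a) * y l).
Proof.
move=> [v [v0 [vi [v1 vx]]]] [w [w0 [wi [w1 wy]]]] /andP [a0 a1].
have a'0 : 0 <= 1 - a by rewrite subr_ge0.
exists (fun A => a * v A + (1 - a) * w A); split; [|split; [|split]].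
- by move=> A; rewrite addr_ge0 // mulr_ge0.
- by move=> A nA; rewrite vi // wi // !mulr0 addr0.
- by rewrite big_split /= -!mulr_sumr v1 w1 !mulr1 addrC subrK.
- move=> l; rewrite vx wy !mulr_sumr -big_split /=.
  by apply: eq_bigr => A _; rewrite [RHS]mulrDl !mulrA.
Qed.

(* Shrinking toward the empty independent set keeps a point in the hull. *)
Lemma indep_hull_scale (x : T -> R) (a : R) :
  in_indep_hull I x -> 0 <= a <= 1 -> in_indep_hull I (fun l => a * x l).
Proof.
move=> hx a01.
suff -> : (fun l => a * x l) =
    (fun l => a * x l + (1 - a) * (l \in finset.set0)%:R).
  exact: indep_hull_convex hx (indep_hull_vertex independent_set0) a01.
by apply: funext => l; rewrite inE mulr0 addr0.
Qed.

(* The empirical frequency vector of a finite list of independent sets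
   lies in the hull: it is the convex combination with weights given by
   the frequency of each set in the list. *)
Lemma indep_hull_average (K : nat) (A : nat -> {set T}) :
  (forall k, independent I (A k)) ->
  in_indep_hull I (fun l => K%:R^-1 * \sum_(k < K) (l \in A k)%:R : R).
Proof.
move=> Aind; case: K => [|K].
  suff -> : (fun l => 0%:R^-1 * \sum_(k < 0) (l \in A k)%:R : R) =
      (fun l => (l \in finset.set0)%:R) by exact: indep_hull_vertex independent_set0.
  by apply: funext => l; rewrite big_ord0 mulr0 inE.
pose W (B : {set T}) : R := K.+1%:R^-1 * \sum_(k < K.+1) (B == A k)%:R.
have sumW g : \sum_B W B * g B = K.+1%:R^-1 * \sum_(k < K.+1) g (A k).
  rewrite (eq_bigr (fun B => K.+1%:R^-1 * \sum_(k < K.+1) g B * (B == A k)%:R)).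
    by rewrite -mulr_sumr exchange_big; congr (_ * _); apply: eq_bigr => k _;
      rewrite sum_indicator.
  move=> B _; rewrite /W -mulrA mulr_suml; congr (_ * _).
  by apply: eq_bigr => k _; rewrite mulrC.
exists W; split; [|split; [|split]].
- by move=> B; rewrite mulr_ge0 ?invr_ge0 ?ler0n ?sumr_ge0 // => k _; rewrite ler0n.
- move=> B nB; rewrite /W big1 ?mulr0 // => k _.
  by case: eqP => // BA; move: nB; rewrite BA Aind.
- under eq_bigr do rewrite -[W _]mulr1.
  by rewrite sumW sumr_const card_ord mulVf.
- by move=> l; rewrite sumW.
Qed.

Lemma cluster_continuous_limit (U : topologicalType) (f : U -> R)
  (u : nat -> U) (w : U) (y : R) :
  continuous f -> cluster (u @ \oo) w -> f \o u @ \oo --> y -> f w = y.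
Proof.
move=> fC; rewrite cluster_cvgE => -[G PG [Gw uG]] fuy.
have fGw : f @ G --> f w by move=> P /fC /= HP; exact: Gw.
have fGy : f @ G --> y by move=> P /fuy /= HP; exact: uG.
exact: (norm_cvg_unique fGw fGy).
Qed.

Local Notation weights V := (prod_topology (fun _ : V => R)).

Lemma linear_functional_continuous (V : finType) (c : V -> R) :
  continuous (fun x : weights V => \sum_A x A * c A).
Proof.
move=> x.
have sum_cvg := @cvg_big R V +%R 0 xpredT _ (weights V) (nbhs x) (index_enum V)
  (fun A y => y A * c A) (fun A => x A * c A) _.
apply: sum_cvg; first exact: add_continuous.
move=> A _; apply: cvgMl; exact: (@proj_continuous V (fun _ => R) A x).
Qed.

Lemma bounded_weights_cluster (V : finType) (u : nat -> weights V) :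
  (forall n A, 0 <= u n A <= 1) ->
  exists w : weights V, (forall A, 0 <= w A <= 1) /\ cluster (u @ \oo) w.
Proof.
move=> u01.
have cpt := @tychonoff V (fun _ => R) (fun _ => `[(0:R), 1])
  (fun _ => @segment_compact R 0 1).
have [w [w01 uw]] :
    [set f : weights V | forall A, `[(0:R), 1] (f A)] `&` cluster (u @ \oo) !=set0.
  by apply: cpt; exists 0%N => // n _ A; rewrite /mkset in_itv /= u01.
by exists w.
Qed.

Lemma indep_hull_closed (u : nat -> T -> R) (x : T -> R) :
  (forall n, in_indep_hull I (u n)) ->
  (forall l, (fun n => u n l) @ \oo --> x l) ->
  in_indep_hull I x.
Proof.
move=> hu ux; have [W HW] := choice hu.
have W01 n A : 0 <= W n A <= 1.
  have [W0 [_ [W1 _]]] := HW n.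
  by rewrite W0 /= -W1 (bigD1 A) //= lerDl sumr_ge0.
have [w [w01 Ww]] := bounded_weights_cluster W01.
have limw (c : {set T} -> R) (y : R) :
    (fun n => \sum_A W n A * c A) @ \oo --> y -> \sum_A w A * c A = y.
  exact: (cluster_continuous_limit (linear_functional_continuous (c := c)) Ww).
have limw_cst (c : {set T} -> R) (y : R) :
    (forall n, \sum_A W n A * c A = y) -> \sum_A w A * c A = y.
  by move=> Wc; apply: limw; apply: cvg_near_cst; apply: nearW.
exists w; split; [|split; [|split]].
- by move=> A; case/andP: (w01 A).
- move=> A nA; rewrite -(sum_indicator w A); apply: limw_cst => n.
  by rewrite sum_indicator; have [_ [-> //]] := HW n.
- under eq_bigr do rewrite -[w _]mulr1.
  apply: limw_cst => n; under eq_bigr do rewrite mulr1.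
  by have [_ [_ [-> _]]] := HW n.
- move=> l; apply/esym/limw.
  suff -> : (fun n => \sum_A W n A * (l \in A)%:R) = (fun n => u n l) by exact: ux.
  by apply: funext => n; have [_ [_ [_ ->]]] := HW n.
Qed.

End IndependentSetHull.

Section FramedSchedules.
Variables (T : finType) (I : T -> {set T}) (D : T -> T -> int).
Local Notation Ds := (Dstar I D).

Lemma delay_le_Dstar l l' : l' \in I l -> (`|D l l'| <= Ds)%N.
Proof.
move=> Hl'; apply: leq_trans (leq_bigmax l).
by rewrite (bigD1 l') //= leq_maxl.
Qed.

Lemma avg_success_collision_free (R : realType) (S : schedule T) l n :
  collision_free I D S ->
  avg_success R I D S l n = n%:R^-1 * (\sum_(t < n) S l (Posz t))%:R.
Proof.
move=> cf; rewrite /avg_success natr_sum; congr (_ * _); apply: eq_bigr => t _.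
by case St: (S l (Posz t)) => //=; rewrite (cf _ _ St).
Qed.

Definition frame_set (TF : nat) (S : schedule T) (k : nat) : {set T} :=
  [set l | S l (Posz (k * TF))].

Lemma framed_slot TF S l k i : framed I D TF S -> (i < TF)%N ->
  S l (Posz (k * TF + i)) = (i < TF - Ds)%N && (l \in frame_set TF S k).
Proof.
move=> [_ [_ hk]] hi; have [idle const] := hk l k; rewrite inE.
case: (ltnP i (TF - Ds)) => hi2 /=.
  by rewrite -{2}[(k * TF)%N]addn0; apply: const => //; lia.
by apply: idle; rewrite hi2 hi.
Qed.

Lemma framed_count TF S l K : framed I D TF S ->
  (\sum_(t < K * TF) S l (Posz t) =
   (TF - Ds) * \sum_(k < K) (l \in frame_set TF S k))%N.
Proof.
move=> HF; have hTF : (Ds < TF)%N by case: HF.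
elim: K => [|K IH]; first by rewrite mul0n !big_ord0 muln0.
rewrite mulSnr big_split_ord /= IH big_ord_recr /= mulnDr; congr (_ + _)%N.
under eq_bigr => i _ do rewrite framed_slot //.
case: (l \in frame_set TF S K); last by rewrite muln0 big1 // => i _; rewrite andbF.
rewrite muln1 -(big_mkord xpredT (fun i => ((i < TF - Ds)%N && true : nat))).
rewrite (big_cat_nat _ (n := (TF - Ds)%N)) //=; last by rewrite leq_subr.
rewrite (eq_big_nat _ _ (F2 := fun=> 1%N)); last by move=> i /andP [_ ->].
rewrite [X in (_ + X)%N](eq_big_nat _ _ (F2 := fun=> 0%N)); last first.
  by move=> i /andP [h _]; rewrite andbT ltnNge h.
by rewrite !sum_nat_const_nat subn0 muln1 muln0 addn0.
Qed.

(* With [TF >= 2 Ds + 1], each frame contains two transmission slots at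
   every distance up to [Ds]; collision freedom then forbids any link of
   a frame set from interfering with another one: frame sets are independent. *)
Lemma frame_set_independent TF S k : framed I D TF S -> collision_free I D S ->
  (2 * Ds + 1 <= TF)%N -> independent I (frame_set TF S k).
Proof.
move=> HF cf hTF.
apply/forallP => l; apply/implyP => Hl.
apply/forallP => l'; apply/implyP => Hl'; apply/negP => Hl'2.
have hd := delay_le_Dstar Hl'.
have clash (i j : nat) : (i < TF - Ds)%N -> (j < TF - Ds)%N ->
    Posz (k * TF + i) + D l l' = Posz (k * TF + j) -> False.
  move=> hi hj he.
  have Si : S l (Posz (k * TF + i)) by rewrite framed_slot ?hi ?Hl //; lia.
  have := cf _ _ Si; move/existsPn/(_ l'); rewrite Hl' /= he.
  by rewrite framed_slot ?hj ?Hl'2 //; lia.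
by move: hd; case: (D l l') clash => [n|n] /= clash hd;
  [apply: (clash 0%N n) | apply: (clash n.+1 0%N)]; lia.
Qed.

Lemma framed_avg_success (R : realType) TF S l K :
  framed I D TF S -> collision_free I D S ->
  avg_success R I D S l (K * TF) =
  (TF - Ds)%:R / TF%:R * (K%:R^-1 * \sum_(k < K) (l \in frame_set TF S k)%:R).
Proof.
move=> HF cf; rewrite avg_success_collision_free // framed_count //.
by rewrite !natrM natr_sum invfM; ring.
Qed.

Lemma framed_rate_in_hull (R : realType) TF S (r : T -> R) :
  framed I D TF S -> collision_free I D S -> (2 * Ds + 1 <= TF)%N ->
  rate_vector I D S r ->
  exists x : T -> R, in_indep_hull I x /\
    forall l, r l = (1 - Ds%:R / TF%:R) * x l.
Proof.
move=> HF cf hTF Hr.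
pose a : R := (TF - Ds)%:R / TF%:R.
have a0 : a != 0 by rewrite mulf_neq0 ?invr_eq0 // pnatr_eq0; lia.
have aE : 1 - Ds%:R / TF%:R = a.
  by rewrite /a natrB; [field; rewrite pnatr_eq0; lia | lia].
pose freq K l : R := K%:R^-1 * \sum_(k < K) (l \in frame_set TF S k)%:R.
have freq_cvg l : (fun K => freq K l) @ \oo --> a^-1 * r l.
  have -> : (fun K => freq K l) = (fun K => a^-1 * avg_success R I D S l (K * TF)).
    by apply: funext => K; rewrite framed_avg_success // mulrA mulVf ?mul1r.
  apply: cvgMr; apply: cvg_comp (Hr l); apply: cvg_mulnr; lia.
exists (fun l => a^-1 * r l); split.
  apply: (indep_hull_closed (u := freq)) freq_cvg => K.
  by apply: indep_hull_average => k; exact: frame_set_independent.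
by move=> l; rewrite aE mulrA mulfV ?mul1r.
Qed.

End FramedSchedules.

Section PeriodicAverages.
Variables (f : nat -> bool) (P : nat).
Hypothesis f_periodic : forall t, f (t + P)%N = f t.

Lemma count_le n : (\sum_(0 <= t < n) f t <= n)%N.
Proof.
apply: leq_trans (_ : \sum_(0 <= t < n) 1 <= n)%N.
  by apply: leq_sum => t _; case: (f t).
by rewrite sum_nat_const_nat subn0 muln1.
Qed.

Lemma count_shift n :
  (\sum_(0 <= t < n + P) f t = \sum_(0 <= t < P) f t + \sum_(0 <= t < n) f t)%N.
Proof.
rewrite (big_cat_nat _ (n := P)) //=; last by rewrite leq_addl.
congr (_ + _)%N; rewrite -{1}[P]add0n big_addn addnK.
by apply: eq_bigr => t _; rewrite f_periodic.
Qed.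

Lemma count_periodic q rho :
  (\sum_(0 <= t < q * P + rho) f t =
   q * \sum_(0 <= t < P) f t + \sum_(0 <= t < rho) f t)%N.
Proof.
elim: q => [|q IH]; first by rewrite !mul0n !add0n.
have -> : (q.+1 * P + rho = (q * P + rho) + P)%N by rewrite mulSn; lia.
by rewrite count_shift IH mulSn addnA.
Qed.

Lemma count_periodic_bounds n (C := (\sum_(0 <= t < P) f t)%N)
    (Y := (\sum_(0 <= t < n) f t)%N) : (0 < P)%N ->
  (n * C <= Y * P + P * P /\ Y * P <= n * C + P * P)%N.
Proof.
move=> P0; have hn := divn_eq n P.
set q := (n %/ P)%N in hn; set rho := (n %% P)%N in hn.
have hrho : (rho < P)%N by rewrite ltn_mod.
have CP : (C <= P)%N by exact: count_le.
have hY : Y = (q * C + \sum_(0 <= t < rho) f t)%N by rewrite /Y hn count_periodic.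
have hr := count_le rho.
have m1 : (rho * C <= P * P)%N by apply: leq_mul; lia.
have m2 : ((\sum_(0 <= t < rho) f t) * P <= P * P)%N by apply: leq_mul; lia.
rewrite hY hn !mulnDl; split; nia.
Qed.

Lemma periodic_avg_cvg (R : realType) : (0 < P)%N ->
  (fun n => n%:R^-1 * (\sum_(0 <= t < n) f t)%:R : R) @ \oo -->
  ((\sum_(0 <= t < P) f t)%:R / P%:R : R).
Proof.
move=> P0; set C := (\sum_(0 <= t < P) f t)%N.
apply/cvgrPdist_le => e e0.
near=> n.
have [h1 h2] := count_periodic_bounds n P0.
set Y := (\sum_(0 <= t < n) f t)%N in h1 h2 *.
have Pr : 0 < P%:R :> R by rewrite ltr0n.
have ePn : P%:R <= e * n%:R :> R.
  by rewrite mulrC -ler_pdivrMr //; near: n; apply: nbhs_infty_ger.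
have nr : 0 < n%:R :> R.
  by rewrite ltr0n; near: n; exists 1%N.
have h1r : n%:R * C%:R <= Y%:R * P%:R + P%:R * P%:R :> R.
  by rewrite -!natrM -natrD ler_nat.
have h2r : Y%:R * P%:R <= n%:R * C%:R + P%:R * P%:R :> R.
  by rewrite -!natrM -natrD ler_nat.
have E : C%:R / P%:R - n%:R^-1 * Y%:R =
    (n%:R * C%:R - Y%:R * P%:R) / (P%:R * n%:R) :> R.
  by field; apply/andP; split; rewrite gt_eqF.
rewrite /= E ler_norml ler_pdivlMr ?mulr_gt0 // ler_pdivrMr ?mulr_gt0 //.
have PP : P%:R * P%:R <= e * (P%:R * n%:R) :> R.
  by rewrite mulrA (mulrC e) -mulrA ler_pM2l.
apply/andP; split; nra.
Unshelve. all: by end_near.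
Qed.

End PeriodicAverages.

Lemma sum_nth_count (X : eqType) (p : pred X) (x0 : X) (s : seq X) (N : nat) :
  ~~ p x0 -> (size s <= N)%N -> (\sum_(k < N) p (nth x0 s k) = count p s)%N.
Proof.
elim: s N => [|a s IH] [|N] //= hx hs.
- by rewrite big_ord0.
- by rewrite big1 // => k _; rewrite nth_nil (negbTE hx).
- by rewrite big_ord_recl /= IH.
Qed.

Section CyclicSchedule.
Variables (T : finType) (I : T -> {set T}) (D : T -> T -> int).
Local Notation Ds := (Dstar I D).
Variables (TF N : nat) (s : seq {set T}).
Hypothesis Ds_lt_TF : (Ds < TF)%N.
Hypothesis N_gt0 : (0 < N)%N.
Hypothesis s_indep : forall A, A \in s -> independent I A.

Definition cycle_set (k : nat) : {set T} := nth finset.set0 s (k %% N).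

Definition cyclic_schedule : schedule T := fun l t =>
  if t is Posz n then (n %% TF < TF - Ds)%N && (l \in cycle_set (n %/ TF))
  else false.

Lemma cycle_set_independent k : independent I (cycle_set k).
Proof.
rewrite /cycle_set; case: (ltnP (k %% N) (size s)) => h.
  exact: s_indep (mem_nth _ h).
by rewrite nth_default //; exact: independent_set0.
Qed.

Lemma cyclic_schedule_framed : framed I D TF cyclic_schedule.
Proof.
split; [by [] | split; first by move=> l [n|n]].
move=> l k; split => [i /andP [hi1 hi2] | i j hi hj] /=.
  by rewrite modnMDl modn_small // ltnNge hi1.
rewrite !modnMDl !modn_small; try lia.
by rewrite hi hj /= !divnMDl ?divn_small //; lia.
Qed.

(* Transmissions stay inside their own frame (delays are at most [Ds]),
   where all transmitters form an independent set. *)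
Lemma cyclic_schedule_collision_free : collision_free I D cyclic_schedule.
Proof.
move=> l [n|n] //= /andP [hn hl]; apply/existsPn => l'.
apply/negP => /andP [Hl' HS]; have hd := delay_le_Dstar D Hl'.
move: HS; case E: (Posz n + D l l') => [n'|n'] //= /andP [hn' hl'].
have same_frame : (n' %/ TF = n %/ TF)%N.
  have dn := divn_eq n TF; have dn' := divn_eq n' TF.
  set q := (n %/ TF)%N in dn *; set q' := (n' %/ TF)%N in dn' *.
  set r := (n %% TF)%N in dn hn; set r' := (n' %% TF)%N in dn' hn'.
  case: (ltngtP q' q) => // hq.
    have : (q'.+1 * TF <= q * TF)%N by rewrite leq_mul2r hq orbT.
    rewrite mulSn; lia.
  have : (q.+1 * TF <= q' * TF)%N by rewrite leq_mul2r hq orbT.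
  rewrite mulSn; lia.
move: hl'; rewrite same_frame => hl'.
have := cycle_set_independent (n %/ TF).
by move/forallP/(_ l); rewrite hl /= => /forallP/(_ l'); rewrite Hl' hl'.
Qed.

Lemma cyclic_schedule_periodic l t :
  cyclic_schedule l (Posz (t + N * TF)) = cyclic_schedule l (Posz t).
Proof.
rewrite /= /cycle_set addnC modnMDl divnMDl; last lia.
by rewrite modnDl.
Qed.

Lemma cyclic_schedule_rate (R : realType) :
  rate_vector I D cyclic_schedule (fun l =>
    ((\sum_(0 <= t < N * TF) cyclic_schedule l (Posz t))%N)%:R / (N * TF)%:R : R).
Proof.
move=> l.
have -> : (fun n => avg_success R I D cyclic_schedule l n) =
    (fun n => n%:R^-1 * (\sum_(0 <= t < n) cyclic_schedule l (Posz t))%:R).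
  apply: funext => n.
  by rewrite avg_success_collision_free ?big_mkord //; exact: cyclic_schedule_collision_free.
by apply: (periodic_avg_cvg (cyclic_schedule_periodic l)); nia.
Qed.

Hypothesis size_s : (size s <= N)%N.

Lemma cyclic_schedule_count l :
  (\sum_(0 <= t < N * TF) cyclic_schedule l (Posz t) =
   (TF - Ds) * count (fun A : {set T} => l \in A) s)%N.
Proof.
rewrite big_mkord (framed_count l N cyclic_schedule_framed); congr (_ * _)%N.
rewrite -(@sum_nth_count _ (fun A : {set T} => l \in A) finset.set0 s N) ?inE //.
apply: eq_bigr => k _; rewrite inE /= modnMl subn_gt0 Ds_lt_TF mulnK; last lia.
by rewrite /cycle_set modn_small.
Qed.

End CyclicSchedule.

(* Rounding the weights of a hull point [x] down to multiples of [1/N]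
   gives a list of at most [N] independent sets in which every link [l]
   occurs at least [N x_l - M] times, [M] being the number of subsets. *)
Lemma round_hull_point (R : realType) (T : finType) (I : T -> {set T})
    (x : T -> R) (N : nat) : in_indep_hull I x ->
  exists s : seq {set T},
    [/\ forall A, A \in s -> independent I A, (size s <= N)%N &
        forall l, N%:R * x l - #|{set T}|%:R <=
          (count (fun A : {set T} => l \in A) s)%:R].
Proof.
move=> [w [w0 [wi [w1 wx]]]].
pose c (A : {set T}) := Num.truncn (w A * N%:R).
pose s := flatten [seq nseq (c A) A | A <- index_enum {set T}].
have count_s (p : pred {set T}) : count p s = (\sum_A c A * p A)%N.
  rewrite count_flatten -map_comp sumnE big_map.
  by apply: eq_bigr => A _ /=; rewrite count_nseq mulnC.
exists s; split.
- move=> A /flatten_mapP [B _]; rewrite mem_nseq => /andP [cB /eqP ->].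
  by apply: contraT => nB; move: cB; rewrite /c (wi _ nB) mul0r truncn0.
- rewrite -(count_predT s) count_s -(ler_nat R) natr_sum.
  apply: le_trans (_ : \sum_A w A * N%:R <= N%:R).
    by apply: ler_sum => A _; rewrite muln1 truncn_le mulr_ge0 ?ler0n.
  by rewrite -mulr_suml w1 mul1r.
- move=> l; rewrite count_s natr_sum.
  apply: le_trans (_ : \sum_A (w A * N%:R * (l \in A)%:R - 1) <= _).
    rewrite sumrB sumr_const wx mulr_sumr lerD2r le_eqVlt; apply/orP; left.
    by apply/eqP/eq_bigr => A _; rewrite mulrA (mulrC N%:R).
  apply: ler_sum => A _; rewrite natrM.
  case: (l \in A); rewrite ?mulr1 ?mulr0 ?sub0r ?lerN10 //.
  have := truncnS_gt (w A * N%:R); rewrite -/(c A) -addn1 natrD; lra.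
Qed.

(* Arithmetic core of part (ii): with [N = M K0] frames per period and
   frame length [TF = (Ds + 1) K0], both the rounding loss [M/N = 1/K0] and
   the guard-interval loss [Ds/TF < 1/K0] stay below [eps/2] once
   [K0 > 2/eps]. *)
Lemma cyclic_rate_lower_bound (R : realType) (Ds K0 M z : nat) (xl eps : R) :
  0 < eps -> 2 / eps < K0%:R -> (0 < M)%N -> (z <= M * K0)%N ->
  (M * K0)%:R * xl - M%:R <= z%:R ->
  xl - eps <= ((Ds.+1 * K0 - Ds) * z)%:R / ((M * K0) * (Ds.+1 * K0))%:R.
Proof.
move=> e0 hK M0 zN zlow.
have K00 : (0 < K0)%N by rewrite -(ltr_nat R); apply: le_lt_trans hK; rewrite divr_ge0 ?ltW.
have hDs : (Ds <= Ds.+1 * K0)%N by apply: leq_trans (leqnSn _) (leq_pmulr _ K00).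
rewrite natrM natrB // !natrM.
set a := Ds%:R : R; set k := K0%:R : R; set m := M%:R : R; set zr := z%:R : R.
have hk : 2 < k * eps by rewrite -ltr_pdivrMr.
have k1 : 1 <= k by rewrite ler1n.
have m1 : 1 <= m by rewrite ler1n.
have a0 : 0 <= a by rewrite ler0n.
have ht : (Ds.+1)%:R = a + 1 :> R by rewrite -addn1 natrD.
move: zlow; rewrite natrM -/m -/k -/zr => zlow.
have zN' : zr <= m * k by rewrite -natrM ler_nat.
rewrite ht ler_pdivlMr; last by rewrite !mulr_gt0 // ?ltr_wpDl ?ltr01; lra.
have h1 : (a + 1) * k * (m * k * xl - m) <= (a + 1) * k * zr.
  by rewrite ler_wpM2l //; apply: mulr_ge0; lra.
have h2 : a * zr <= a * (m * k) by rewrite ler_wpM2l.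
have h4 : 2 * a + 1 <= eps * k * (a + 1) by nra.
have h3 : (a + 1) * k * m + a * (m * k) <= eps * (m * k * ((a + 1) * k)).
  have : m * k * (2 * a + 1) <= m * k * (eps * k * (a + 1)).
    by rewrite ler_wpM2l //; apply: mulr_ge0; lra.
  lra.
nra.
Qed.

Lemma approximate_by_framed_schedule (R : realType) (T : finType)
    (I : T -> {set T}) (D : T -> T -> int) (x : T -> R) (eps : R) :
  in_indep_hull I x -> 0 < eps ->
  exists (TF : nat) (S : schedule T) (r : T -> R),
    framed I D TF S /\ collision_free I D S /\ rate_vector I D S r /\
    forall l, x l - eps <= r l.
Proof.
move=> hx e0; set Ds := Dstar I D.
pose M := #|{set T}|; pose K0 := (Num.truncn (2 / eps)).+1.
pose N := (M * K0)%N; pose TF := (Ds.+1 * K0)%N.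
have M0 : (0 < M)%N by apply/card_gt0P; exists finset.set0.
have N0 : (0 < N)%N by rewrite muln_gt0 M0.
have TF_gt : (Ds < TF)%N by rewrite leq_pmulr.
have [s [s_indep size_s s_count]] := round_hull_point N hx.
exists TF, (cyclic_schedule I D TF N s); eexists; split; last split; last split.
- exact: cyclic_schedule_framed.
- exact: cyclic_schedule_collision_free.
- exact: cyclic_schedule_rate.
- move=> l /=; rewrite cyclic_schedule_count //.
  apply: cyclic_rate_lower_bound => //; first exact: truncnS_gt.
  exact: leq_trans (count_size _ _) size_s.
Qed.

Theorem theorem3 (R : realType) (T : finType) (I : T -> {set T})
  (D : T -> T -> int) (T_nonempty : (0 < #|T|)%N) :
  (* (i) *)
  (forall (TF : nat) (S : schedule T) (r : T -> R),
     framed I D TF S -> collision_free I D S ->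
     (2 * Dstar I D + 1 <= TF)%N ->
     rate_vector I D S r ->
     (exists x : T -> R, in_indep_hull I x /\
        forall l, r l = (1 - (Dstar I D)%:R / TF%:R) * x l) /\
     in_indep_hull I r) /\
  (* (ii) *)
  (forall (x : T -> R) (eps : R), in_indep_hull I x -> 0 < eps ->
     exists (TF : nat) (S : schedule T) (r : T -> R),
       framed I D TF S /\ collision_free I D S /\ rate_vector I D S r /\
       forall l, x l - eps <= r l).
Proof.
split; last exact: approximate_by_framed_schedule.
move=> TF S r HF cf hTF Hr.
have [x [hx rx]] := framed_rate_in_hull HF cf hTF Hr.
split; first by exists x.
have -> : r = (fun l => (1 - (Dstar I D)%:R / TF%:R) * x l) by apply: funext.
apply: indep_hull_scale => //.
have TF0 : 0 < TF%:R :> R by rewrite ltr0n; lia.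
rewrite lerBlDr lerDl divr_ge0 ?ler0n //= subr_ge0 ler_pdivrMr // mul1r ler_nat.
lia.
Qed.
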